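(* Let $Z$ be any $n\times n$ complex matrix with singular values $r_1,\dots,r_n$, and let $U$ be any $n\times n$ unitary matrix. Then $$\prod_{k=1}^n\frac{|1-r_k|}{1+r_k}\le \frac{|\det(I-Z^*Z)|}{|\det(I-UZ)|^2},$$ where a fraction with zero denominator is interpreted as $+\infty$.
   Context: $Z^*$ denotes the conjugate transpose of $Z$ and $I$ the $n\times n$ identity matrix. *)

(* Complex scalars: an arbitrary numClosedFieldType C
   (algebraically closed field with conjugation and norm, e.g. algC). *)
From HB Require Import structures.
From mathcomp Require Import all_boot all_order all_algebra.
Set Implicit Arguments. Unset Strict Implicit. Unset Printing Implicit Defensive.
Import Order.TTheory GRing.Theory Num.Theory.
Local Open Scope ring_scope.

Definition ctmx (C : numClosedFieldType) (m n : nat) (A : 'M[C]_(m, n)) : 'M[C]_(n, m) :=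
  (map_mx Num.conj A)^T.

(* U is unitary: U U^* = I (for square matrices this is equivalent to U^* U = I) *)
Definition unitary_mx (C : numClosedFieldType) (n : nat) (U : 'M[C]_n) : Prop :=
  U *m ctmx U = 1%:M.

(* r_1..r_n are the singular values of Z: nonnegative reals whose squares
   are the eigenvalues of Z^* Z, counted with algebraic multiplicity. *)
Definition singular_values (C : numClosedFieldType) (n : nat) (Z : 'M[C]_n)
  (r : 'I_n -> C) : Prop :=
  (forall k, 0 <= r k) /\
  char_poly (ctmx Z *m Z) = \prod_(k < n) ('X - (r k ^+ 2)%:P).

From HB Require Import structures.
From mathcomp Require Import all_boot all_order all_algebra.
Set Implicit Arguments. Unset Strict Implicit. Unset Printing Implicit Defensive.
Import Order.TTheory GRing.Theory Num.Theory.
Local Open Scope ring_scope.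

(* The eigenvalues of Z^* Z are the r_k^2, so det (I - Z^* Z) = prod (1 - r_k)(1 + r_k)
   and it suffices to show |det (I - A)| <= prod (1 + r_k) for A = U Z, which has the
   same singular values.  Diagonalising A^* A unitarily writes A^* = M^* diag(r) K with
   M unitary and K a partial isometry, so |det (I - A)| = |det (I - diag(r) K')| for
   the contraction K' = K M^*.  Expanding det (diag a + diag s K') by multilinearity
   in each row with a_k, s_k both nonzero gives |det| <= prod (|a_k| + |s_k|): every
   term of the expansion is a diagonal matrix times I - Q + Q K' for a coordinate
   projection Q, and the eigenvalues of I - Q + Q K' lie in the closed unit disc. *)

Lemma horner_char_poly (R : comNzRingType) n (A : 'M[R]_n) x :
  (char_poly A).[x] = \det (x%:M - A).
Proof.
rewrite /char_poly -horner_evalE -det_map_mx; congr (\det _).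
by apply/matrixP => i j; rewrite !mxE /= horner_evalE hornerD hornerN hornerC hornerMn hornerX.
Qed.

Lemma char_poly_similar (R : comUnitRingType) n (P A : 'M[R]_n) :
  P \in unitmx -> char_poly (invmx P *m A *m P) = char_poly A.
Proof.
move=> P_unit; rewrite /char_poly /char_poly_mx.
have -> : 'X%:M - map_mx polyC (invmx P *m A *m P) =
    map_mx polyC (invmx P) *m ('X%:M - map_mx polyC A) *m map_mx polyC P.
  rewrite mulmxBr mulmxBl !map_mxM; congr (_ - _).
  by rewrite -mulmxA -scalar_mxC mulmxA -map_mxM mulVmx // map_mx1 mul1mx.
by rewrite !det_mulmx mulrC mulrA -det_mulmx -map_mxM mulmxV // map_mx1 det1 mul1r.
Qed.

Section Contraction.
Variables (C : numClosedFieldType) (n : nat).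
Implicit Types (M X : 'M[C]_n) (w : 'rV[C]_n).
Local Open Scope sesquilinear_scope.

Local Notation "''[' u ]" := (dotmx u u).

Definition contraction M := forall w, '[w *m M] <= '[w].

Lemma contraction_diag_gram M (q : 'rV[C]_n) :
  M *m M ^t* = diag_mx q -> (forall k, 0 <= q 0 k <= 1) -> contraction M.
Proof.
move=> MM q01 w; rewrite !dotmxE trmx_mul map_mxM !mulmxA -(mulmxA w) MM.
rewrite mul_mx_diag !mxE; apply: ler_sum => k _; rewrite !mxE mulrAC.
by case/andP: (q01 k) => q0 q1; rewrite ler_piMr ?mul_conjC_ge0.
Qed.

Definition coordproj (b : 'I_n -> bool) : 'M[C]_n := diag_mx (\row_k (b k)%:R).

Lemma coordproj_idem b : coordproj b *m coordproj b = coordproj b.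
Proof.
rewrite mulmx_diag; congr diag_mx; apply/rowP => k; rewrite !mxE.
by case: (b k); rewrite ?mulr1 ?mulr0.
Qed.

Lemma coordproj_contraction b : contraction (coordproj b).
Proof.
apply: (contraction_diag_gram (q := \row_k (b k)%:R)) => [|k].
  rewrite tr_diag_mx map_diag_mx -[RHS]coordproj_idem; congr (_ *m diag_mx _).
  by apply/rowP => k; rewrite !mxE rmorph_nat.
by rewrite mxE; case: (b k); rewrite ?lexx ?ler01.
Qed.

Lemma eigenvalue_compression_le1 b M l : contraction M ->
  eigenvalue (1%:M - coordproj b + coordproj b *m M) l -> `|l| <= 1.
Proof.
move=> cM /eigenvalueP [x eig_x xN0]; set Q := coordproj b in eig_x.
set w := x *m Q.
have [w0 | wN0] := eqVneq w 0.
  have x_eig : x = l *: x.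
    by rewrite -eig_x mulmxDr mulmxBr mulmx1 mulmxA -/w w0 mul0mx addr0 subr0.
  have : (1 - l) *: x = 0 by rewrite scalerBl scale1r -x_eig subrr.
  by move/eqP; rewrite scaler_eq0 (negbTE xN0) orbF subr_eq0 => /eqP <-; rewrite normr1.
have w_eig : w *m M *m Q = l *: w.
  rewrite /w scalemxAl -eig_x mulmxDr mulmxBr mulmx1 !mulmxDl mulNmx.
  by rewrite -!mulmxA coordproj_idem subrr add0r !mulmxA.
have : `|l| ^+ 2 * '[w] <= '[w].
  by rewrite -dnormZ -w_eig; apply: le_trans (coordproj_contraction _ _) (cM _).
rewrite ger_pMl ?dnorm_gt0 // => l2_le1.
by rewrite -(expr_le1 (n := 2)).
Qed.

Lemma det_norm_le1 X : (forall l, eigenvalue X l -> `|l| <= 1) -> `|\det X| <= 1.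
Proof.
move=> eig_le1; have [rs char_rs] := closed_field_poly_normal (char_poly X).
rewrite (monicP (char_poly_monic X)) scale1r in char_rs.
have size_rs : size rs = n.
  by have := size_char_poly X; rewrite char_rs size_prod_XsubC => -[].
have det_rs : \det X = \prod_(z <- rs) z.
  apply: (@mulfI _ ((-1) ^+ n)); first by rewrite signr_eq0.
  by rewrite -char_poly_det char_rs coef0_prod_XsubC size_rs.
rewrite det_rs normr_prod big_seq; apply: prodr_ile1 => z z_rs.
rewrite normr_ge0 eig_le1 //.
by rewrite eigenvalue_root_char char_rs root_prod_XsubC.
Qed.

Lemma det_compression_le1 b M : contraction M ->
  `|\det (1%:M - coordproj b + coordproj b *m M)| <= 1.
Proof. by move=> cM; apply: det_norm_le1 => l; apply: eigenvalue_compression_le1. Qed.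

Definition zero_coord (v : 'rV[C]_n) k : 'rV[C]_n :=
  \row_j (if j == k then 0 else v 0 j).

Lemma det_diag_add_diag_mul_split (a s : 'rV[C]_n) M k :
  \det (diag_mx a + diag_mx s *m M) =
  \det (diag_mx a + diag_mx (zero_coord s k) *m M) +
  \det (diag_mx (zero_coord a k) + diag_mx s *m M).
Proof.
have lift_neq i : (lift k i == k) = false by apply/negbTE; rewrite eq_sym neq_lift.
rewrite (determinant_multilinear
  (B := diag_mx a + diag_mx (zero_coord s k) *m M)
  (C := diag_mx (zero_coord a k) + diag_mx s *m M) (i0 := k) (b := 1) (c := 1)) ?mul1r //.
- by apply/rowP => j; rewrite !mul_diag_mx !mxE eqxx !mul1r mul0r mul0rn addr0 add0r.
- by apply/matrixP => i j; rewrite !mul_diag_mx !mxE lift_neq.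
- by apply/matrixP => i j; rewrite !mul_diag_mx !mxE lift_neq.
Qed.

Lemma det_diag_add_diag_mul_disjoint (a s : 'rV[C]_n) M : contraction M ->
  (forall k, (a 0 k == 0) || (s 0 k == 0)) ->
  `|\det (diag_mx a + diag_mx s *m M)| <= \prod_k (`|a 0 k| + `|s 0 k|).
Proof.
move=> cM disj; set Q := coordproj (fun k => s 0 k != 0).
have -> : diag_mx a + diag_mx s *m M = diag_mx (a + s) *m (1%:M - Q + Q *m M).
  apply/matrixP => i j; rewrite !mul_diag_mx !mxE.
  have [->|sN0] := eqVneq (s 0 i) 0.
    by rewrite !(mul0r, mul0rn, addr0, subr0) mulr_natr.
  have -> : a 0 i = 0 by move: (disj i); rewrite (negbTE sN0) orbF => /eqP.
  by rewrite !(add0r, mul1r, mulr1n, subrr, mul0rn).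
rewrite det_mulmx det_diag normrM -[X in _ <= X]mulr1.
apply: ler_pM; rewrite ?normr_ge0 ?det_compression_le1 // normr_prod.
by apply: ler_prod => k _; rewrite normr_ge0 mxE ler_normD.
Qed.

Lemma det_diag_add_diag_mul_le (a s : 'rV[C]_n) M : contraction M ->
  `|\det (diag_mx a + diag_mx s *m M)| <= \prod_k (`|a 0 k| + `|s 0 k|).
Proof.
move=> cM; pose overlap (u v : 'rV[C]_n) := [pred j | (u 0 j != 0) && (v 0 j != 0)].
have [m] := ubnP #|overlap a s|; elim: m a s => // m IHm a s; rewrite ltnS => ov_le.
have [k /andP [ak sk] | disj] := pickP (overlap a s); last first.
  apply: det_diag_add_diag_mul_disjoint => // j.
  by move/negbT: (disj j); rewrite negb_and !negbK.
have card_zero_coord (u v : 'rV[C]_n) :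
    (forall j, (u 0 j != 0) && (v 0 j != 0) = (j != k) && ((a 0 j != 0) && (s 0 j != 0))) ->
    (#|overlap u v| < m)%N.
  move=> ov_uv; apply: leq_trans ov_le; rewrite (cardD1 k (overlap a s)).
  by rewrite inE ak sk add1n ltnS; apply/eq_leq/eq_card => j; rewrite !inE ov_uv.
have prod_zero_coord (g : 'I_n -> C -> C) (v : 'rV[C]_n) :
    \prod_j g j (zero_coord v k 0 j) = g k 0 * \prod_(j | j != k) g j (v 0 j).
  rewrite (bigD1 k) //= !mxE eqxx; congr (_ * _).
  by apply: eq_bigr => j /negbTE jk; rewrite !mxE jk.
rewrite (det_diag_add_diag_mul_split _ _ _ k) (bigD1 k) //= mulrDl.
apply: le_trans (ler_normD _ _) (lerD _ _).
  have ov_lt : (#|overlap a (zero_coord s k)| < m)%N.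
    by apply: card_zero_coord => j; rewrite !mxE; case: (eqVneq j k) => [->|_];
      rewrite ?eqxx ?andbF.
  have := IHm _ _ ov_lt.
  by rewrite (prod_zero_coord (fun j x => `|a 0 j| + `|x|)) normr0 addr0.
have ov_lt : (#|overlap (zero_coord a k) s| < m)%N.
  by apply: card_zero_coord => j; rewrite !mxE; case: (eqVneq j k) => [->|_];
    rewrite ?eqxx.
have := IHm _ _ ov_lt.
by rewrite (prod_zero_coord (fun j x => `|x| + `|s 0 j|)) normr0 add0r.
Qed.

Lemma det_one_sub_diag_mul_le (s : 'rV[C]_n) M : contraction M ->
  `|\det (1%:M - diag_mx s *m M)| <= \prod_k (1 + `|s 0 k|).
Proof.
move=> cM; have -> : 1%:M - diag_mx s *m M = diag_mx (const_mx 1) + diag_mx (- s) *m M.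
  by apply/matrixP => i j; rewrite !mul_diag_mx !mxE mulNr.
apply: le_trans (det_diag_add_diag_mul_le _ _ cM) _.
by under eq_bigr do rewrite !mxE normr1 normrN.
Qed.

End Contraction.

Section Adjoint.
Variable C : numClosedFieldType.
Local Open Scope sesquilinear_scope.

Lemma ctmxE m p (A : 'M[C]_(m, p)) : ctmx A = A ^t*.
Proof. by rewrite /ctmx map_trmx. Qed.

Lemma trmxC_mul m p q (A : 'M[C]_(m, p)) (B : 'M[C]_(p, q)) :
  (A *m B) ^t* = B ^t* *m A ^t*.
Proof. by rewrite trmx_mul map_mxM. Qed.

Lemma trmxC1 n : (1%:M : 'M[C]_n) ^t* = 1%:M.
Proof. by rewrite trmx1 map_mx1. Qed.

Lemma trmxCB m p (A B : 'M[C]_(m, p)) : (A - B) ^t* = A ^t* - B ^t*.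
Proof. by rewrite linearB map_mxB. Qed.

Lemma det_trmxC n (A : 'M[C]_n) : \det (A ^t*) = (\det A)^*.
Proof. by rewrite det_map_mx det_tr. Qed.

Lemma norm_det_one_sub_unitary_conj n (A X M : 'M[C]_n) :
  M ^t* *m M = 1%:M -> A ^t* = M ^t* *m X *m M ->
  `|\det (1%:M - A)| = `|\det (1%:M - X)|.
Proof.
move=> MtM AtE; rewrite -norm_conjC -det_trmxC trmxCB trmxC1 AtE.
have -> : 1%:M - M ^t* *m X *m M = M ^t* *m (1%:M - X) *m M.
  by rewrite mulmxBr mulmxBl mulmx1 MtM.
by rewrite !det_mulmx mulrAC -det_mulmx MtM det1 mul1r.
Qed.

Section GramDiagonal.
Variables (m p : nat) (B : 'M[C]_(m, p)) (d : 'rV[C]_m).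
Hypothesis gramB : B *m B ^t* = diag_mx d.

Lemma gram_diag_dotmx k : d 0 k = dotmx (row k B) (row k B).
Proof.
have /matrixP/(_ k k) := gramB; rewrite !mxE eqxx mulr1n => <-.
by rewrite dotmxE !mxE; apply: eq_bigr => j _; rewrite !mxE.
Qed.

Lemma gram_diag_ge0 k : 0 <= d 0 k.
Proof. by rewrite gram_diag_dotmx dnorm_ge0. Qed.

Lemma gram_diag_factor : exists K : 'M[C]_(m, p),
  B = diag_mx (map_mx sqrtC d) *m K /\
  K *m K ^t* = diag_mx (map_mx (fun x => (x != 0)%:R) d).
Proof.
exists (diag_mx (map_mx (fun x => (sqrtC x)^-1) d) *m B); split.
  rewrite mulmxA mulmx_diag; apply/matrixP => i j; rewrite mul_diag_mx !mxE.
  have [d0 | dN0] := eqVneq (d 0 i) 0.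
    have rowB0 : row i B = 0.
      by apply/eqP/contraT => /dotmx_is_dotmx; rewrite -gram_diag_dotmx d0 ltxx.
    by have /rowP/(_ j) := rowB0; rewrite !mxE => ->; rewrite mulr0.
  by rewrite divff ?mul1r // sqrtC_eq0.
rewrite trmxC_mul !mulmxA -(mulmxA _ B) gramB tr_diag_mx map_diag_mx !mulmx_diag.
congr diag_mx; apply/rowP => k; rewrite !mxE.
have [-> | dN0] := eqVneq (d 0 k) 0; first by rewrite sqrtC0 invr0 !mul0r.
have s_ge0 : 0 <= sqrtC (d 0 k) by rewrite sqrtC_ge0 gram_diag_ge0.
by rewrite fmorphV /= (geC0_conj s_ge0) mulrAC -invfM -expr2 sqrtCK mulVf.
Qed.

End GramDiagonal.

Lemma spectral_adjoint_gram n (A : 'M[C]_n) (M := spectralmx (A ^t* *m A)) :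
  (M *m A ^t*) *m (M *m A ^t*) ^t* = diag_mx (spectral_diag (A ^t* *m A)).
Proof.
have /orthomx_spectralP H_spec : A ^t* *m A \is normalmx.
  by apply/normalmxP; rewrite trmxC_mul trmxCK.
have /unitarymxP MMt : M \is unitarymx := spectral_unitarymx _.
(* Abstracting [M] and [d] stops [H_spec] from rewriting inside them. *)
rewrite -/M in H_spec; set d := spectral_diag _ in H_spec *.
rewrite trmxC_mul trmxCK !mulmxA -(mulmxA M) H_spec invmx_unitary ?spectral_unitarymx //.
by rewrite !mulmxA MMt mul1mx -mulmxA MMt mulmx1.
Qed.

Lemma prod_sqrtC_roots n (d : 'rV[C]_n) (r : 'I_n -> C) (F : C -> C) :
  (forall k, 0 <= r k) ->
  \prod_k ('X - (d 0 k)%:P) = \prod_k ('X - (r k ^+ 2)%:P) ->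
  \prod_k F (sqrtC (d 0 k)) = \prod_k F (r k).
Proof.
move=> r_ge0 eq_roots.
have d_perm : perm_eq [seq d 0 k | k <- index_enum 'I_n]
                      [seq r k ^+ 2 | k <- index_enum 'I_n].
  by apply: prod_XsubC_eq; rewrite !big_map.
rewrite -(big_map (fun k => d 0 k) xpredT (F \o sqrtC)) (perm_big _ d_perm) big_map.
by apply: eq_bigr => k _; rewrite /= sqrCK.
Qed.

Lemma det_one_sub_le n (A : 'M[C]_n) (r : 'I_n -> C) :
  singular_values A r -> `|\det (1%:M - A)| <= \prod_k (1 + r k).
Proof.
rewrite /singular_values ctmxE => -[r_ge0 char_gram].
have gram := spectral_adjoint_gram A.
set M := spectralmx _ in gram; set d := spectral_diag _ in gram.
have MtM : M ^t* *m M = 1%:M by apply/mulmx1C/unitarymxP/spectral_unitarymx.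
have [K [MAt KKt]] := gram_diag_factor gram; set s := map_mx sqrtC d in MAt.
have cK : contraction (K *m M ^t*).
  apply: (contraction_diag_gram (q := map_mx (fun x => (x != 0)%:R) d)) => [|k].
    by rewrite trmxC_mul trmxCK mulmxA -(mulmxA K) MtM mulmx1.
  by rewrite mxE; case: (d 0 k != 0); rewrite ?lexx ?ler01.
rewrite (@norm_det_one_sub_unitary_conj _ _ (diag_mx s *m (K *m M ^t*)) M) //; last first.
  by rewrite [diag_mx _ *m _]mulmxA -MAt -!mulmxA MtM mulmx1 mulmxA MtM mul1mx.
apply: le_trans (det_one_sub_diag_mul_le _ cK) _.
have char_d : \prod_k ('X - (d 0 k)%:P) = \prod_k ('X - (r k ^+ 2)%:P).
  rewrite -char_gram; have /orthomx_spectralP-> : A ^t* *m A \is normalmx.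
    by apply/normalmxP; rewrite trmxC_mul trmxCK.
  rewrite char_poly_similar ?spectral_unit // char_poly_trig ?diag_mx_is_trig //.
  by apply: eq_bigr => k _; rewrite mxE eqxx mulr1n.
suff -> : \prod_k (1 + r k) = \prod_k (1 + `|s 0 k|) by [].
rewrite -(prod_sqrtC_roots (fun x => 1 + x) r_ge0 char_d); apply: eq_bigr => k _.
by rewrite mxE ger0_norm // sqrtC_ge0 (gram_diag_ge0 gram).
Qed.

Lemma singular_values_unitary_mul n (U Z : 'M[C]_n) r :
  unitary_mx U -> singular_values Z r -> singular_values (U *m Z) r.
Proof.
rewrite /unitary_mx /singular_values !ctmxE => UUt [r_ge0 charZ]; split=> //.
by rewrite trmxC_mul mulmxA -(mulmxA _ _ U) (mulmx1C UUt) mulmx1.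
Qed.

Lemma det_one_sub_gram n (Z : 'M[C]_n) r :
  singular_values Z r ->
  \det (1%:M - ctmx Z *m Z) = \prod_k ((1 - r k) * (1 + r k)).
Proof.
move=> [_ charZ]; rewrite -horner_char_poly charZ horner_prod.
by apply: eq_bigr => k _; rewrite hornerXsubC -subr_sqr expr1n.
Qed.

End Adjoint.

Theorem mainTheorem2 (C : numClosedFieldType) (n : nat) (Z U : 'M[C]_n)
  (r : 'I_n -> C) :
  singular_values Z r -> unitary_mx U ->
  \det (1%:M - U *m Z) != 0 ->
  \prod_(k < n) (`|1 - r k| / (1 + r k))
    <= `|\det (1%:M - ctmx Z *m Z)| / `|\det (1%:M - U *m Z)| ^+ 2.
Proof.
move=> svZ unitU detN0; have [r_ge0 _] := svZ.
have D_le := det_one_sub_le (singular_values_unitary_mul unitU svZ).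
set D := `|\det (1%:M - U *m Z)| in D_le *; set P := \prod_k (1 + r k) in D_le *.
have P_gt0 : 0 < P by apply: prodr_gt0 => k _; rewrite ltr_wpDr.
have D_gt0 : 0 < D by rewrite normr_gt0.
rewrite (det_one_sub_gram svZ) normr_prod prodf_div.
have -> : \prod_k `|(1 - r k) * (1 + r k)| = \prod_k `|1 - r k| * P.
  rewrite -big_split; apply: eq_bigr => k _.
  by rewrite normrM (ger0_norm (addr_ge0 ler01 (r_ge0 k))).
have -> : \prod_k `|1 - r k| / P = \prod_k `|1 - r k| * P / P ^+ 2.
  by rewrite expr2 invfM mulrA mulfK // gt_eqF.
have Q_ge0 : 0 <= \prod_k `|1 - r k| by apply: prodr_ge0.
rewrite ler_wpM2l ?mulr_ge0 ?(ltW P_gt0) //.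
by rewrite lef_pV2 ?posrE ?exprn_gt0 // lerXn2r ?nnegrE ?(ltW D_gt0) ?(ltW P_gt0).
Qed.
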